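(* In the setting below, for all $\mu_1,\mu_2,\mu_3\in\mathbb F_q^A$, $$\big(\mathsf{CCZ}^{(q)}\big)^{\otimes M}\,|\overline{\mu_1}\rangle|\overline{\mu_2}\rangle|\overline{\mu_3}\rangle=(-1)^{\mathrm{tr}\left(\sum_{b\in B}(\mu_1)_b(\mu_2)_b(\mu_3)_b\right)}|\overline{\mu_1}\rangle|\overline{\mu_2}\rangle|\overline{\mu_3}\rangle,$$ where $(\mathsf{CCZ}^{(q)})^{\otimes M}$ applies $\mathsf{CCZ}^{(q)}$ to the three qudits at position $\alpha$ of the three blocks, for every $\alpha\in M$.
   Context: Let $q=2^l$ ($l\ge2$) and $\mathbb F_q$ the field with $q$ elements. Fix integers $k,m,s$ with $q/3\ge k\ge m\ge s>0$ and $2k\le q-m$. Fix $A\subseteq\mathbb F_q$ with $|A|=k$, $B\subseteq A$ with $|B|=s$, and let $M=\mathbb F_q\setminus B$. $\mathbb F_q[x]_{<d}$ denotes polynomials of degree $<d$, $\phi_M(P)=(P(\alpha))_{\alpha\in M}$, and $C_2^\perp=\phi_M(\{P\in\mathbb F_q[x]_{<m}:P(b)=0\ \forall b\in B\})$. For $a\in A$, $\ell_a(x)=\prod_{a'\in A\setminus\{a\}}\frac{x-a'}{a-a'}$; for $\mu\in\mathbb F_q^A$, $p_\mu=\sum_a\mu_a\ell_a$ and $c_\mu=\phi_M(p_\mu)$. A qudit has Hilbert space $\mathbb C^q$ with orthonormal basis $\{|x\rangle:x\in\mathbb F_q\}$. The trace $\mathrm{tr}:\mathbb F_q\to\mathbb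 F_2$ is $\mathrm{tr}(x)=\sum_{i=0}^{l-1}x^{2^i}$, and $\mathsf{CCZ}^{(q)}|x\rangle|y\rangle|z\rangle=(-1)^{\mathrm{tr}(xyz)}|x\rangle|y\rangle|z\rangle$. The codestate of $\mu$ is $|\overline{\mu}\rangle=|C_2^\perp|^{-1/2}\sum_{\alpha\in C_2^\perp}|c_\mu+\alpha\rangle\in(\mathbb C^q)^{\otimes M}$. *)

From HB Require Import structures.
From mathcomp Require Import all_boot all_order all_algebra all_field.
Set Implicit Arguments.
Unset Strict Implicit.
Unset Printing Implicit Defensive.
Import Order.TTheory GRing.Theory Num.Theory.
Local Open Scope ring_scope.

Definition subT (F : finFieldType) (S : {set F}) : finType := {x : F | x \in S}.

(* Absolute trace F_{2^l} -> F_2 (value in F, which is 0 or 1). *)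
Definition trF (F : finFieldType) (l : nat) (x : F) : F :=
  \sum_(i < l) x ^+ (2 ^ i).

Definition sgnF (F : finFieldType) (l : nat) (x : F) : algC :=
  if trF l x == 0 then 1 else -1.

(* Words indexed by M = F \ B. *)
Definition word (F : finFieldType) (B : {set F}) := {ffun subT (~: B) -> F}.

Definition phiM (F : finFieldType) (B : {set F}) (P : {poly F}) : word B :=
  [ffun a : subT (~: B) => P.[val a]].

Definition lagr (F : finFieldType) (A : {set F}) (a : F) : {poly F} :=
  \prod_(a' in A :\ a) ((a - a')^-1 *: ('X - a'%:P)).

Definition p_mu (F : finFieldType) (A : {set F}) (mu : {ffun subT A -> F}) : {poly F} :=
  \sum_(a : subT A) mu a *: lagr A (val a).

Definition C2perp (F : finFieldType) (B : {set F}) (m : nat) : {set word B} :=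
  [set phiM B (\poly_(i < m) c`_i) |
     c : m.-tuple F in [set c : m.-tuple F | [forall b in B, (\poly_(i < m) c`_i).[b] == 0]]].

(* Computational basis ket |w>, as a vector (function on basis labels). *)
Definition ket (F : finFieldType) (B : {set F}) (w : word B) : word B -> algC :=
  fun x => (x == w)%:R.

Definition codestate (F : finFieldType) (A B : {set F}) (m : nat)
    (mu : {ffun subT A -> F}) : word B -> algC :=
  fun x => (sqrtC (#|C2perp B m|%:R))^-1 *
           \sum_(al in C2perp B m) ket (phiM B (p_mu mu) + al) x.

Definition tensor3 (F : finFieldType) (B : {set F}) (f g h : word B -> algC)
    : word B * word B * word B -> algC :=
  fun t => f t.1.1 * g t.1.2 * h t.2.

(* CCZ^(q) |x>|y>|z> = (-1)^{tr(xyz)} |x>|y>|z> : its diagonal phase. *)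
Definition CCZq_phase (F : finFieldType) (l : nat) (x y z : F) : algC :=
  sgnF l (x * y * z).

Definition CCZ_tensorM (F : finFieldType) (l : nat) (B : {set F})
    (psi : word B * word B * word B -> algC) : word B * word B * word B -> algC :=
  fun t => (\prod_(al : subT (~: B)) CCZq_phase l (t.1.1 al) (t.1.2 al) (t.2 al)) * psi t.

From HB Require Import structures.
From mathcomp Require Import all_boot all_order all_algebra all_fingroup.
From mathcomp Require Import all_solvable all_field zify.
Import GRing.Theory.
Local Open Scope ring_scope.

(* A basis state in the support of a codestate is phi_M(p_mu + Q) with
   deg Q < m and Q = 0 on B, so on a support triple the total phase is
   (-1)^{tr(S)}, S being the sum over M of P = f1 f2 f3 with f_i = p_{mu_i} + Q_i.
   Since deg P <= 3k - 3 < q - 1, the sum of P over the whole field vanishes; in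
   characteristic 2 the sum over M therefore equals the sum over B, where
   P(b) = mu1_b mu2_b mu3_b. *)

Section TraceSign.

Context {F : finFieldType} {l : nat}.
Hypothesis cardF : #|F| = (2 ^ l)%N.

Lemma pchar2_card : 2 \in [pchar F].
Proof. exact: card_finPcharP cardF _. Qed.

Lemma exprD_pchar2_pow2 (x y : F) i :
  (x + y) ^+ (2 ^ i) = x ^+ (2 ^ i) + y ^+ (2 ^ i).
Proof. by apply: exprDn_pchar; rewrite pnatX pnatE // pchar2_card. Qed.

Lemma trF_add (x y : F) : trF l (x + y) = trF l x + trF l y.
Proof. by rewrite /trF -big_split; apply: eq_bigr => i _; rewrite exprD_pchar2_pow2. Qed.

(* Squaring permutes the conjugates x^(2^i) cyclically, since x^(2^l) = x. *)
Lemma trF_sqr (x : F) : trF l x ^+ 2 = trF l x.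
Proof.
rewrite /trF (big_morph (fun z : F => z ^+ 2) (id1 := 0) (op1 := +%R)); last 2 first.
- by move=> a b; rewrite -[2%N]/(2 ^ 1)%N exprD_pchar2_pow2.
- by rewrite expr0n.
case: l cardF => [|l'] cardF'; first by rewrite !big_ord0.
rewrite big_ord_recr big_ord_recl /= -exprM -expnSr -cardF' expf_card addrC.
by congr (_ + _); apply: eq_bigr => i _; rewrite -exprM -expnSr.
Qed.

Lemma trF_01 (x : F) : trF l x = 0 \/ trF l x = 1.
Proof.
have : trF l x * (trF l x - 1) = 0 by rewrite mulrBr mulr1 -expr2 trF_sqr subrr.
by move/eqP; rewrite mulf_eq0 subr_eq0 => /orP[/eqP|/eqP]; [left|right].
Qed.

Lemma sgnF0 : sgnF l (0 : F) = 1.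
Proof. by rewrite /sgnF /trF big1 ?eqxx // => i _; rewrite expr0n expn_eq0. Qed.

Lemma sgnFD (x y : F) : sgnF l (x + y) = sgnF l x * sgnF l y.
Proof.
rewrite /sgnF trF_add.
case: (trF_01 x) => ->; case: (trF_01 y) => ->;
  rewrite ?addr0 ?add0r ?eqxx ?oner_eq0 ?mulr1 ?mul1r //.
by rewrite addrr_pchar2 ?pchar2_card // eqxx mulrNN mulr1.
Qed.

Lemma sgnF_sum (I : finType) (P : pred I) (f : I -> F) :
  \prod_(i | P i) sgnF l (f i) = sgnF l (\sum_(i | P i) f i).
Proof. by rewrite (big_morph (sgnF l) sgnFD sgnF0). Qed.

End TraceSign.

Section PowerSums.

Variable F : finFieldType.

Lemma natr_card_finField : #|F|%:R = 0 :> F.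
Proof. by rewrite -cardsT -FinRing.zmodXgE expg_cardG ?inE. Qed.

Lemma exists_expf_neq1 j : (0 < j < #|F|.-1)%N -> exists2 c : F, c != 0 & c ^+ j != 1.
Proof.
move=> /andP[j_gt0 j_lt].
suff /existsP[c /andP[c_neq0 cj_neq1]] : [exists c : F, (c != 0) && (c ^+ j != 1)].
  by exists c.
apply: contraT => /existsPn roots.
have := @max_poly_roots _ ('X^j - 1%:P) (enum (predC1 (0 : F))).
rewrite -size_poly_eq0 size_XnsubC // enum_uniq -cardE cardC1.
have -> : all (root ('X^j - 1%:P)) (enum (predC1 (0 : F))).
  apply/allP => x; rewrite mem_enum inE => x_neq0.
  by move: (roots x); rewrite x_neq0 negbK rootE !hornerE subr_eq0.
by move=> /(_ isT isT isT); rewrite ltnS leqNgt j_lt.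
Qed.

(* Substituting x := c x multiplies the power sum by c^j. *)
Lemma sum_expr_finField j : (j < #|F|.-1)%N -> \sum_(x : F) x ^+ j = 0.
Proof.
case: j => [|j] j_lt.
  by under eq_bigr do rewrite expr0; rewrite sumr_const natr_card_finField.
have [c c_neq0 cj_neq1] := @exists_expf_neq1 j.+1 j_lt.
have : (c ^+ j.+1 - 1) * \sum_(x : F) x ^+ j.+1 = 0.
  rewrite mulrBl mul1r [X in _ - X](reindex_inj (mulfI c_neq0)) /= mulr_sumr.
  by apply/eqP; rewrite subr_eq0; apply/eqP/eq_bigr => x _; rewrite exprMn.
by move/eqP; rewrite mulf_eq0 subr_eq0 (negPf cj_neq1) => /eqP.
Qed.

Lemma sum_horner_finField (P : {poly F}) : (size P < #|F|)%N -> \sum_(x : F) P.[x] = 0.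
Proof.
move=> size_P; under eq_bigr do rewrite horner_coef.
rewrite exchange_big big1 // => i _.
by rewrite -mulr_sumr sum_expr_finField ?mulr0 //; have := ltn_ord i; lia.
Qed.

Lemma sum_horner_setC_pchar2 (P : {poly F}) (B : {set F}) :
  2 \in [pchar F] -> (size P < #|F|)%N ->
  \sum_(x in ~: B) P.[x] = \sum_(x in B) P.[x].
Proof.
move=> pchar2 size_P; have := sum_horner_finField P size_P.
rewrite (bigID (mem B)) /= => /eqP; rewrite addr_eq0 => /eqP ->.
by rewrite oppr_pchar2 //; apply: eq_bigl => x; rewrite inE.
Qed.

End PowerSums.

Lemma size_mul3_leq [R : nzRingType] [p q r : {poly R}] [k : nat] :
  (size p <= k)%N -> (size q <= k)%N -> (size r <= k)%N ->
  (size (p * q * r)%R <= (3 * k).-2)%N.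
Proof.
move=> sp sq sr; have spq := size_polyMleq p q; have spqr := size_polyMleq (p * q) r.
lia.
Qed.

Section Lagrange.

Variables (F : finFieldType) (A : {set F}).

Lemma horner_lagr (a b : F) : a \in A -> b \in A -> (lagr A a).[b] = (a == b)%:R.
Proof.
move=> aA bA; rewrite /lagr horner_prod.
have [<-|ab] := eqVneq a b.
  apply: big1 => a' /setD1P[a'a _].
  by rewrite hornerZ hornerXsubC mulVf // subr_eq0 eq_sym.
rewrite (bigD1 b) /=; last by rewrite !inE eq_sym ab.
by rewrite hornerZ hornerXsubC subrr mulr0 mul0r.
Qed.

Lemma horner_p_mu (mu : {ffun subT A -> F}) (a : subT A) : (p_mu mu).[val a] = mu a.
Proof.
rewrite /p_mu horner_sum (bigD1 a) //= hornerZ horner_lagr ?(valP a) // eqxx mulr1.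
rewrite big1 ?addr0 // => a' /negPf a'_neq.
by rewrite hornerZ horner_lagr ?(valP a) ?(valP a') // val_eqE a'_neq mulr0.
Qed.

Lemma size_lagr (a : F) : a \in A -> size (lagr A a) = #|A|.
Proof.
move=> aA; rewrite /lagr size_prod => [|a' /setD1P[a'a _]]; last first.
  by rewrite scale_poly_eq0 invr_eq0 subr_eq0 eq_sym (negPf a'a) polyXsubC_eq0.
have size_factor a' : a' \in A :\ a -> size ((a - a')^-1 *: ('X - a'%:P)) = 2%N.
  case/setD1P => a'a _.
  by rewrite size_scale ?size_XsubC // invr_eq0 subr_eq0 eq_sym.
rewrite (eq_bigr _ size_factor) sum_nat_const -[#|in_mem^~ _|]/#|A :\ a|.
by rewrite (cardsD1 a A) aA /=; lia.
Qed.

Lemma size_p_mu (mu : {ffun subT A -> F}) : (size (p_mu mu) <= #|A|)%N.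
Proof.
apply: (big_ind (fun p : {poly F} => size p <= #|A|)%N) => [|p q sp sq|a _].
- by rewrite size_poly0.
- by apply: leq_trans (size_polyD _ _) _; rewrite geq_max sp sq.
- by apply: leq_trans (size_scale_leq _ _) _; rewrite size_lagr ?(valP a).
Qed.

End Lagrange.

Lemma codestate_supportP [F : finFieldType] [A B : {set F}] (m : nat)
    (mu : {ffun subT A -> F}) (w : word B) :
  codestate m mu w = 0 \/ exists2 Q : {poly F}, (size Q <= m)%N &
     {in B, forall b, Q.[b] = 0} /\ w = phiM B (p_mu mu + Q).
Proof.
case: (pickP [pred al in C2perp B m | phiM B (p_mu mu) + al == w]) => [al | none].
  case/andP=> /imsetP[c]; rewrite inE => /forall_inP vanish -> /eqP <-.
  right; exists (\poly_(i < m) c`_i); first exact: size_poly.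
  split=> [b /vanish/eqP //|]; by apply/ffunP => x; rewrite !ffunE hornerD.
left; rewrite /codestate big1 ?mulr0 // => al alC.
by rewrite /ket; move: (none al); rewrite /= alC /= eq_sym => ->.
Qed.

Lemma CCZ_phase_codewords [F : finFieldType] [l : nat] (cardF : #|F| = (2 ^ l)%N)
    [k m : nat] [A B : {set F}] (hk : (3 * k <= #|F|)%N) (hmk : (m <= k)%N)
    (hA : #|A| = k) (hBA : B \subset A)
    [mu1 mu2 mu3 : {ffun subT A -> F}] [Q1 Q2 Q3 : {poly F}] :
    (size Q1 <= m)%N -> (size Q2 <= m)%N -> (size Q3 <= m)%N ->
    {in B, forall b, Q1.[b] = 0} -> {in B, forall b, Q2.[b] = 0} ->
    {in B, forall b, Q3.[b] = 0} ->
  \prod_(al : subT (~: B)) CCZq_phase l (phiM B (p_mu mu1 + Q1) al)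
       (phiM B (p_mu mu2 + Q2) al) (phiM B (p_mu mu3 + Q3) al)
  = sgnF l (\sum_(a : subT A | val a \in B) mu1 a * mu2 a * mu3 a).
Proof.
move=> sQ1 sQ2 sQ3 vQ1 vQ2 vQ3.
set P := (p_mu mu1 + Q1) * (p_mu mu2 + Q2) * (p_mu mu3 + Q3).
have size_f (mu : {ffun subT A -> F}) (Q : {poly F}) :
    (size Q <= m)%N -> (size (p_mu mu + Q)%R <= k)%N.
  move=> sQ; apply: leq_trans (size_polyD _ _) _.
  by rewrite geq_max -hA size_p_mu hA (leq_trans sQ).
have size_P : (size P < #|F|)%N.
  apply: leq_ltn_trans (size_mul3_leq (size_f _ _ sQ1) (size_f _ _ sQ2) (size_f _ _ sQ3)) _.
  have : (0 < #|F|)%N by apply/card_gt0P; exists 0.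
  lia.
have sum_M : \sum_(al : subT (~: B)) phiM B (p_mu mu1 + Q1) al *
    phiM B (p_mu mu2 + Q2) al * phiM B (p_mu mu3 + Q3) al = \sum_(x in ~: B) P.[x].
  by rewrite [RHS]big_sub; apply: eq_bigr => al _; rewrite !ffunE !hornerM.
have sum_B : \sum_(a : subT A | val a \in B) mu1 a * mu2 a * mu3 a
    = \sum_(x in B) P.[x].
  transitivity (\sum_(x in A | x \in B) P.[x]).
    rewrite big_sub_cond; apply: eq_bigr => a aB.
    by rewrite !hornerM !hornerD !horner_p_mu vQ1 // vQ2 // vQ3 // !addr0.
  by apply: eq_bigl => x; rewrite andb_idl // => /(subsetP hBA).
by rewrite /CCZq_phase (sgnF_sum cardF) sum_M sum_B
  sum_horner_setC_pchar2 ?(pchar2_card cardF).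
Qed.

Theorem proposition5p10 (F : finFieldType) (l : nat) (hl : (2 <= l)%N)
    (hq : #|F| = (2 ^ l)%N) (k m s : nat)
    (hk : (3 * k <= #|F|)%N) (hkm : (m <= k)%N) (hms : (s <= m)%N) (hs : (0 < s)%N)
    (h2k : (2 * k <= #|F| - m)%N)
    (A B : {set F}) (hA : #|A| = k) (hBA : B \subset A) (hB : #|B| = s)
    (mu1 mu2 mu3 : {ffun subT A -> F}) :
  forall t : word B * word B * word B,
    CCZ_tensorM l (tensor3 (@codestate F A B m mu1) (@codestate F A B m mu2) (@codestate F A B m mu3)) t
    = sgnF l (\sum_(a : subT A | val a \in B) mu1 a * mu2 a * mu3 a)
      * tensor3 (@codestate F A B m mu1) (@codestate F A B m mu2) (@codestate F A B m mu3) t.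
Proof.
move=> [[x y z]]; rewrite /CCZ_tensorM /tensor3 /=.
case: (codestate_supportP m mu1 x) => [->|[Q1 sQ1 [vQ1 ->]]]; first by rewrite !(mulr0, mul0r).
case: (codestate_supportP m mu2 y) => [->|[Q2 sQ2 [vQ2 ->]]]; first by rewrite !(mulr0, mul0r).
case: (codestate_supportP m mu3 z) => [->|[Q3 sQ3 [vQ3 ->]]]; first by rewrite !(mulr0, mul0r).
by rewrite (CCZ_phase_codewords hq hk hkm hA hBA sQ1 sQ2 sQ3 vQ1 vQ2 vQ3).
Qed.
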